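(* Let $q$ be a prime power and $F/\mathbb{F}_q$ an algebraic function field with full constant field $\mathbb{F}_q$ of genus $g\geq 2$. For $n\geq 0$ let $A_n$ be the number of effective divisors of degree $n$ of $F$, for $r\geq1$ let $B_r$ be the number of places of degree $r$ of $F$, let $\Sigma_1=\sum_{n=0}^{g-1}A_n$, let $\Delta_1=\{r: 1\leq r\leq g-1,\ B_r\geq 1\}$ and $\Delta_1'=\Delta_1\setminus\{1\}$. (1) Let $(m_r)_{r\in\Delta_1}$ be integers with $m_r\geq 0$ and $\sum_{r\in\Delta_1} r\,m_r\leq g-1$. Then $$\Sigma_1\geq\prod_{r\in\Delta_1}\binom{B_r+m_r}{m_r}.$$ (2) Suppose $B_1\geq 1$ and let $r_1,\dots,r_u$ be distinct elements of $\Delta_1'$. Then $$\Sigma_1\geq\binom{B_1+g-1}{g-1}+\sum_{i=1}^u\left(\binom{B_{r_i}+\lfloor\frac{g-1}{r_i}\rfloor}{\lfloor\frac{g-1}{r_i}\rfloor}-1\right)\binom{B_1+((g-1)\bmod r_i)}{(g-1)\bmod r_i}.$$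
   Context: $(g-1)\bmod r$ denotes the remainder of the Euclidean division of $g-1$ by $r$. *)

From HB Require Import structures.
From mathcomp Require Import all_boot all_order all_algebra.
From Stdlib Require List.
Set Implicit Arguments.
Unset Strict Implicit.
Unset Printing Implicit Defensive.
Import Order.TTheory GRing.Theory Num.Theory.
Local Open Scope ring_scope.

Definition counts (T : Type) (X : T -> Prop) (n : nat) : Prop :=
  exists f : 'I_n -> T,
    injective f /\ (forall i, X (f i)) /\ (forall x, X x -> exists i, f i = x).

Section FunctionField.
Variables (K : finFieldType) (F : fieldType) (iota : {rmorphism K -> F}).

Definition in_Kx (x y : F) : Prop :=
  exists p r : {poly K}, r != 0 /\
    y = (map_poly iota p).[x] / (map_poly iota r).[x].

Definition transcendental (x : F) : Prop :=
  forall p : {poly K}, p != 0 -> (map_poly iota p).[x] != 0.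

Definition is_function_field : Prop :=
  exists x : F, transcendental x /\
    exists s : seq F, forall y : F, exists c : 'I_(size s) -> F,
      (forall i, in_Kx x (c i)) /\ y = \sum_(i < size s) c i * s`_i.

Definition full_constant_field : Prop :=
  forall y : F, (exists p : {poly K}, p != 0 /\ root (map_poly iota p) y) ->
    exists c : K, y = iota c.

Definition valring (O : F -> Prop) : Prop :=
  (forall c : K, O (iota c)) /\
  (forall a b, O a -> O b -> O (a - b)) /\
  (forall a b, O a -> O b -> O (a * b)) /\
  (exists z, O z /\ ~ (exists c : K, z = iota c)) /\
  (exists z, ~ O z) /\
  (forall z, z != 0 -> O z \/ O z^-1).

Definition max_ideal (O : F -> Prop) (z : F) : Prop :=
  O z /\ ~ (z != 0 /\ O z^-1).

Definition place_of (O P : F -> Prop) : Prop :=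
  valring O /\ (forall z, P z <-> max_ideal O z).

Definition is_place (P : F -> Prop) : Prop := exists O, place_of O P.

(* deg P = r : the residue class field O/P has dimension r over K *)
Definition place_deg (P : F -> Prop) (r : nat) : Prop :=
  exists O, place_of O P /\
    exists e : 'I_r -> F, (forall i, O (e i)) /\
      (forall z, O z -> exists c : 'I_r -> K,
          P (z - \sum_(i < r) iota (c i) * e i)) /\
      (forall c : 'I_r -> K, P (\sum_(i < r) iota (c i) * e i) ->
          forall i, c i = 0).

Definition is_divisor (D : (F -> Prop) -> int) : Prop :=
  (forall P, D P != 0 -> is_place P) /\
  exists s : seq (F -> Prop), forall P, D P != 0 -> List.In P s.

Definition div_deg (D : (F -> Prop) -> int) (n : int) : Prop :=
  exists (s : seq (F -> Prop)) (d : (F -> Prop) -> nat),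
    List.NoDup s /\ (forall P, D P != 0 -> List.In P s) /\
    (forall P, List.In P s -> place_deg P (d P)) /\
    n = \sum_(P <- s) (d P)%:Z * D P.

(* v_P(z) >= - D(P) : with t a prime element of P, z * t^(D P) lies in O *)
Definition val_ge_neg (P : F -> Prop) (z : F) (k : int) : Prop :=
  exists O t, place_of O P /\ P t /\ t != 0 /\
    (forall w, P w -> O (w / t)) /\ O (z * t ^ k).

Definition LRR (D : (F -> Prop) -> int) (z : F) : Prop :=
  z = 0 \/ forall P, is_place P -> val_ge_neg P z (D P).

Definition dimL (D : (F -> Prop) -> int) (l : nat) : Prop :=
  exists e : 'I_l -> F, (forall i, LRR D (e i)) /\
    (forall c : 'I_l -> K, \sum_(i < l) iota (c i) * e i = 0 ->
        forall i, c i = 0) /\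
    (forall z, LRR D z -> exists c : 'I_l -> K,
        z = \sum_(i < l) iota (c i) * e i).

Definition is_genus (g : nat) : Prop :=
  (forall D n l, is_divisor D -> div_deg D n -> dimL D l ->
      n - l%:Z + 1 <= g%:Z) /\
  (exists D n l, is_divisor D /\ div_deg D n /\ dimL D l /\
      n - l%:Z + 1 = g%:Z).

Definition eff_div_of_deg (n : nat) (D : (F -> Prop) -> int) : Prop :=
  is_divisor D /\ (forall P, 0 <= D P) /\ div_deg D n%:Z.

Definition place_of_deg (r : nat) (P : F -> Prop) : Prop :=
  is_place P /\ place_deg P r.

End FunctionField.

(* Enumerate, for each degree r, the B_r places of degree r.  An effective
   divisor supported on these places is determined by its vector of
   multiplicities, since a place has only one degree; and there are
   C(b + m, m) vectors of b naturals with sum at most m.  For (1), the vectors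
   with total at most m_r on the places of each degree r give
   prod_r C(B_r + m_r, m_r) effective divisors of degree at most
   sum_r r m_r <= g - 1.  For (2), take the divisors supported on places of
   degree one of degree at most g - 1, and, for each r_i, the divisors whose
   part on places of degree r_i is nonzero of degree at most
   r_i floor((g - 1) / r_i), completed by a part of degree at most
   (g - 1) mod r_i on places of degree one; these families are disjoint. *)

From mathcomp Require Import all_boot all_order all_algebra.
From Stdlib Require Import ClassicalEpsilon IndefiniteDescription.
From Stdlib Require List.
Set Implicit Arguments. Unset Strict Implicit. Unset Printing Implicit Defensive.
Import GRing.Theory.

Lemma cat_inj (T : eqType) (v v' w w' : seq T) :
  size v = size v' -> v ++ w = v' ++ w' -> v = v' /\ w = w'.
Proof. by move=> hs /eqP; rewrite eqseq_cat // => /andP [/eqP -> /eqP ->]. Qed.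

Lemma uniq_flatten_cat (W : nat -> seq (seq nat)) b (s : seq (nat * seq nat)) :
  (forall k v, v \in W k -> size v = b) -> (forall k, uniq (W k)) ->
  uniq (map snd s) -> uniq (flatten [seq [seq v ++ p.2 | v <- W p.1] | p <- s]).
Proof.
move=> hW hu; elim: s => [|p s IH] //= /andP [hp hs].
rewrite cat_uniq IH // andbT; apply/andP; split.
  rewrite map_inj_in_uniq // => v v' hv hv' e.
  by have [] := cat_inj (etrans (hW _ _ hv) (esym (hW _ _ hv'))) e.
apply/hasPn => _ /flattenP [t /mapP [q hq ->] /mapP [v hv ->]].
apply/negP => /mapP [v' hv' e].
have [_ e2] := cat_inj (etrans (hW _ _ hv) (esym (hW _ _ hv'))) e.
by move: hp; rewrite -e2 map_f.
Qed.

Lemma In_mem (T : eqType) (s : seq T) x : List.In x s <-> x \in s.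
Proof.
elim: s => [|y s IH] //=; rewrite in_cons; split.
  by case=> [->|/IH ->]; rewrite ?eqxx ?orbT.
by case/orP => [/eqP ->|/IH]; auto.
Qed.

Lemma In_zip1 (A B : Type) (s : seq A) (t : seq B) x a :
  List.In (x, a) (zip s t) -> List.In x s.
Proof.
elim: s t => [|y s IH] [|b t] //= [[-> _]|h]; first by left.
by right; apply: IH h.
Qed.

Lemma NoDup_map_in (T : eqType) (U : Type) (f : T -> U) (s : seq T) :
  uniq s -> {in s &, injective f} -> List.NoDup (map f s).
Proof.
elim: s => [|x s IH] /=; first by constructor.
case/andP => hx hu hinj; constructor; last first.
  by apply: IH => // i j hi hj; apply: hinj; rewrite inE ?hi ?hj orbT.
case/List.in_map_iff => y [e /In_mem hy]; move: hx.
by rewrite (hinj x y) ?hy // ?inE ?eqxx ?hy ?orbT.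
Qed.

(** * Vectors of naturals with bounded sum *)

Definition incr_head (v : seq nat) := if v is x :: v' then x.+1 :: v' else [::].

(* Pascal's rule: a vector has head 0, or is [incr_head] of a vector of smaller sum. *)
Fixpoint seqs_sumn_le (b m : nat) {struct b} : seq (seq nat) :=
  match b with
  | 0 => [:: [::]]
  | b'.+1 => let fix seqs_m m := match m with
                | 0 => [:: nseq b'.+1 0]
                | m'.+1 => [seq 0 :: v | v <- seqs_sumn_le b' m] ++ map incr_head (seqs_m m')
                end in seqs_m m
  end.

Lemma seqs_sumn_leSS b m : seqs_sumn_le b.+1 m.+1 =
  [seq 0 :: v | v <- seqs_sumn_le b m.+1] ++ map incr_head (seqs_sumn_le b.+1 m).
Proof. by []. Qed.

Lemma size_seqs_sumn_le b m : size (seqs_sumn_le b m) = 'C(b + m, m).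
Proof.
elim: b m => [|b IHb] m; first by rewrite add0n binn.
elim: m => [|m IHm]; first by rewrite bin0.
by rewrite seqs_sumn_leSS size_cat !size_map IHb IHm !addSn !addnS binS.
Qed.

Lemma mem_seqs_sumn_le b m v : v \in seqs_sumn_le b m -> size v = b /\ sumn v <= m.
Proof.
elim: b m v => [|b IHb] m v; first by rewrite inE => /eqP ->.
elim: m v => [|m IHm] v.
  by rewrite inE => /eqP ->; rewrite size_nseq sumn_nseq mul0n.
rewrite seqs_sumn_leSS mem_cat => /orP [/mapP [w hw ->]|/mapP [w hw ->]].
  by have [hs hm] := IHb _ _ hw; rewrite /= hs add0n.
by have [] := IHm _ hw; case: w {hw} => [|x w] //= [->].
Qed.

Lemma seqs_sumn_le_uniq b m : uniq (seqs_sumn_le b m).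
Proof.
elim: b m => [|b IHb] m //; elim: m => [|m IHm] //.
rewrite seqs_sumn_leSS cat_uniq map_inj_uniq ?IHb ?andTb; last by move=> u w [].
apply/andP; split.
  apply/hasPn => _ /mapP [w hw ->]; apply/mapP => -[u _].
  by have [] := mem_seqs_sumn_le hw; case: w {hw} => [|x w] //= _ _ [].
rewrite map_inj_in_uniq // => u w /mem_seqs_sumn_le [hu _] /mem_seqs_sumn_le [hw _].
by case: u hu => [|x u] //; case: w hw => [|y w] // _ _ [-> ->].
Qed.

Lemma count_sumn0_seqs_sumn_le b m :
  count (fun v => sumn v == 0) (seqs_sumn_le b m) = 1.
Proof.
elim: b m => [|b IHb] m //; elim: m => [|m IHm].
  by rewrite /= sumn_nseq mul0n.
rewrite seqs_sumn_leSS count_cat !count_map (eq_count (a2 := fun v => sumn v == 0)) // IHb.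
rewrite (eq_in_count (a2 := pred0)) ?count_pred0 // => w /mem_seqs_sumn_le [h _].
by case: w h.
Qed.

Definition seqs_sumn_le_pos b m := [seq v <- seqs_sumn_le b m | 0 < sumn v].

Lemma size_seqs_sumn_le_pos b m : size (seqs_sumn_le_pos b m) = 'C(b + m, m) - 1.
Proof.
rewrite size_filter -size_seqs_sumn_le -(count_predC (fun v => 0 < sumn v)).
rewrite (eq_count (a1 := predC _) (a2 := fun v => sumn v == 0)) ?count_sumn0_seqs_sumn_le ?addnK //.
by move=> v /=; rewrite lt0n negbK.
Qed.

Lemma mem_seqs_sumn_le_pos b m v : v \in seqs_sumn_le_pos b m ->
  [/\ size v = b, sumn v <= m & 0 < sumn v].
Proof. by rewrite mem_filter => /andP [h /mem_seqs_sumn_le [-> ->]]. Qed.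

(** * Valuation rings, places and their degrees *)

Local Open Scope ring_scope.

Section Places.
Variables (K : finFieldType) (F : fieldType) (iota : {rmorphism K -> F}).

Section ValuationRing.
Variable O : F -> Prop.
Hypothesis hO : valring iota O.

Lemma valring0 : O 0.
Proof. by case: hO => h _; have := h 0; rewrite rmorph0. Qed.
Lemma valring1 : O 1.
Proof. by case: hO => h _; have := h 1; rewrite rmorph1. Qed.
Lemma valringB a b : O a -> O b -> O (a - b).
Proof. by case: hO => _ [h _]; apply: h. Qed.
Lemma valringM a b : O a -> O b -> O (a * b).
Proof. by case: hO => _ [_ [h _]]; apply: h. Qed.
Lemma valringD a b : O a -> O b -> O (a + b).
Proof.
move=> ha hb; have -> : a + b = a - (0 - b) by rewrite sub0r opprK.
by apply: valringB => //; apply: valringB => //; apply: valring0.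
Qed.
Lemma valringVr z : z != 0 -> O z \/ O z^-1.
Proof. by case: hO => _ [_ [_ [_ [_ h]]]]; apply: h. Qed.
Lemma valring_const c : O (iota c).
Proof. by case: hO. Qed.

End ValuationRing.

Section Place.
Variables (O P : F -> Prop).
Hypothesis hOP : place_of iota O P.

Lemma place_valring : valring iota O. Proof. by case: hOP. Qed.
Lemma placeP z : P z <-> O z /\ ~ (z != 0 /\ O z^-1).
Proof. by case: hOP => _; apply. Qed.

Lemma place0 : P 0.
Proof.
by apply/placeP; split; [exact: valring0 place_valring | case; rewrite eqxx].
Qed.

Lemma placeM x y : P x -> O y -> P (y * x).
Proof.
have hO := place_valring.
move=> /placeP [hx hnx] hy; apply/placeP; split; first exact: valringM.
case=> hyx hinv; apply: hnx; split; first by apply: contraNneq hyx => ->; rewrite mulr0.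
have hy0 : y != 0 by apply: contraNneq hyx => ->; rewrite mul0r.
have -> : x^-1 = y * (y * x)^-1 by rewrite invfM mulrA mulfV // mul1r.
exact: valringM.
Qed.

Lemma placeD x y : P x -> P y -> P (x + y).
Proof.
have hO := place_valring.
move=> hx hy; have [->|x0] := eqVneq x 0; first by rewrite add0r.
have [->|y0] := eqVneq y 0; first by rewrite addr0.
have : y / x != 0 by rewrite mulf_neq0 // invr_eq0.
case/(valringVr hO) => h.
  rewrite -[x + y](divfK x0) mulrDl divff //.
  by apply: placeM => //; apply: valringD => //; apply: valring1.
rewrite -[x + y](divfK y0) mulrDl divff //.
apply: placeM => //; apply: valringD => //; last exact: valring1.
by rewrite invf_div in h.
Qed.

Lemma place_sum (I : Type) (r : seq I) (Q : pred I) (f : I -> F) :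
  (forall i, Q i -> P (f i)) -> P (\sum_(i <- r | Q i) f i).
Proof. by move=> h; apply: big_ind => //; [exact: place0 | exact: placeD]. Qed.

Lemma valringE z : O z <-> z = 0 \/ ~ P z^-1.
Proof.
have hO := place_valring.
split=> [hz|[->|hn]]; first (have [->|z0] := eqVneq z 0; [by left|right]).
- by case/placeP => _ []; rewrite invr_eq0 invrK.
- exact: valring0.
have [->|z0] := eqVneq z 0; first exact: valring0.
case: (valringVr hO z0) => // h.
apply: NNPP => hnO; apply: hn; apply/placeP; split => //.
by rewrite invrK; case.
Qed.

End Place.

Lemma place_of_valring_sub O1 O2 P :
  place_of iota O1 P -> place_of iota O2 P -> forall z, O1 z -> O2 z.
Proof. by move=> h1 h2 z /(valringE h1) /(valringE h2). Qed.

(* A nonzero row of the kernel of the matrix expressing the [e'] in terms of the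
   [e] modulo P gives a nontrivial combination of the [e'] lying in P. *)
Lemma place_deg_le O P r r' (e : 'I_r -> F) (e' : 'I_r' -> F) :
  place_of iota O P ->
  (forall z, O z -> exists c : 'I_r -> K, P (z - \sum_(i < r) iota (c i) * e i)) ->
  (forall j, O (e' j)) ->
  (forall c : 'I_r' -> K, P (\sum_(j < r') iota (c j) * e' j) -> forall j, c j = 0) ->
  (r' <= r)%N.
Proof.
move=> hOP hspan hO' hind; rewrite leqNgt; apply/negP => hlt.
have [C hC] := functional_choice _ (fun j => hspan _ (hO' j)).
pose M : 'M[K]_(r', r) := \matrix_(j, i) C j i.
have /matrix0Pn [j0 [k0 hk0]] : kermx M != 0.
  rewrite kermx_eq0; apply: contraL hlt => /eqP <-; rewrite -leqNgt.
  exact: rank_leq_col.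
pose c j := kermx M j0 j.
have hcC i : \sum_(j < r') c j * C j i = 0.
  apply: (@etrans _ _ ((kermx M *m M) j0 i)); last by rewrite mulmx_ker mxE.
  by rewrite mxE; apply: eq_bigr => j _; rewrite [M j i]mxE.
have hcomb : \sum_(j < r') iota (c j) * e' j =
    \sum_(j < r') iota (c j) * (e' j - \sum_(i < r) iota (C j i) * e i).
  under [RHS]eq_bigr => j _ do rewrite mulrBr.
  rewrite sumrB [X in _ - X](_ : _ = 0) ?subr0 //.
  under eq_bigr => j _ do rewrite mulr_sumr.
  rewrite exchange_big /=; apply: big1 => i _.
  under eq_bigr => j _ do rewrite mulrA -rmorphM.
  by rewrite -mulr_suml -rmorph_sum hcC rmorph0 mul0r.
have hP : P (\sum_(j < r') iota (c j) * e' j).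
  by rewrite hcomb; apply: (place_sum hOP) => j _; apply: (placeM hOP) => //;
    apply: valring_const (place_valring hOP) _.
by move: hk0; rewrite (hind _ hP k0 : kermx M j0 k0 = 0) eqxx.
Qed.

Lemma place_deg_uniq P r r' : place_deg iota P r -> place_deg iota P r' -> r = r'.
Proof.
move=> [O1 [h1 [e1 [hO1 [hs1 hi1]]]]] [O2 [h2 [e2 [hO2 [hs2 hi2]]]]].
apply/eqP; rewrite eqn_leq (place_deg_le h2 hs2 _ hi1) ?(place_deg_le h1 hs1 _ hi2) //.
  by move=> j; apply: (place_of_valring_sub h2 h1).
by move=> j; apply: (place_of_valring_sub h1 h2).
Qed.

End Places.

Local Close Scope ring_scope.

(** * Divisors supported on finitely many places *)

(* Places are predicates on [F], so their equality is decided classically. *)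
Definition eqc (T : Type) (x y : T) : bool :=
  if excluded_middle_informative (x = y) then true else false.

Lemma eqcP (T : Type) (x y : T) : reflect (x = y) (eqc x y).
Proof. by rewrite /eqc; case: excluded_middle_informative => h; constructor. Qed.

Lemma eqc_refl (T : Type) (x : T) : eqc x x.
Proof. exact/eqcP. Qed.

Section DivisorsOfPlaces.
Variables (K : finFieldType) (F : fieldType) (iota : {rmorphism K -> F}).
Notation place := (F -> Prop).

(* [pds] lists places together with their degrees, [c] their multiplicities. *)
Fixpoint multiplicity (pds : seq (place * nat)) (c : seq nat) (P : place) : nat :=
  match pds, c with
  | x :: pds', a :: c' => (if eqc P x.1 then a else 0) + multiplicity pds' c' P
  | _, _ => 0
  end.

Fixpoint degree_at (pds : seq (place * nat)) (P : place) : nat :=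
  if pds is x :: pds' then (if eqc P x.1 then x.2 else 0) + degree_at pds' P else 0.

Fixpoint weighted_deg (pds : seq (place * nat)) (c : seq nat) : nat :=
  match pds, c with
  | x :: pds', a :: c' => x.2 * a + weighted_deg pds' c'
  | _, _ => 0
  end.

Definition divisor_of pds c (P : place) : int := Posz (multiplicity pds c P).

Lemma weighted_deg_cat (p1 p2 : seq ((F -> Prop) * nat)) v w : size v = size p1 ->
  weighted_deg (p1 ++ p2) (v ++ w) = weighted_deg p1 v + weighted_deg p2 w.
Proof. by elim: p1 v => [|x p1 IH] [|a v] //= [/IH ->]; rewrite addnA. Qed.

Lemma weighted_deg_nseq0 (p : seq ((F -> Prop) * nat)) n : weighted_deg p (nseq n 0) = 0.
Proof. by elim: p n => [|x p IH] [|n] //=; rewrite IH muln0. Qed.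

Lemma multiplicity_out pds c P :
  ~ List.In P (map fst pds) -> multiplicity pds c P = 0.
Proof.
elim: pds c => [|x pds IH] [|a c] //= /Decidable.not_or [hx hn].
by case: eqcP => [e|_]; [case: hx | rewrite IH].
Qed.

Lemma degree_at_out pds P : ~ List.In P (map fst pds) -> degree_at pds P = 0.
Proof.
elim: pds => [|x pds IH] //= /Decidable.not_or [hx hn].
by case: eqcP => [e|_]; [case: hx | rewrite IH].
Qed.

Lemma multiplicity_supp pds c P :
  multiplicity pds c P <> 0 -> List.In P (map fst pds).
Proof. by move=> h; apply: NNPP => /(multiplicity_out c). Qed.

Lemma degree_at_in pds x : List.NoDup (map fst pds) -> List.In x pds ->
  degree_at pds x.1 = x.2.
Proof.
elim: pds => [|y pds IH] //= /List.NoDup_cons_iff [hy hnd].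
case=> [<-|hx]; first by rewrite eqc_refl degree_at_out ?addn0.
case: eqcP => [e|_]; last exact: IH.
by case: hy; rewrite -e; apply/List.in_map_iff; exists x.
Qed.

Lemma multiplicity_in pds c x a : List.NoDup (map fst pds) ->
  List.In (x, a) (zip pds c) -> multiplicity pds c x.1 = a.
Proof.
elim: pds c => [|y pds IH] [|b c] //= /List.NoDup_cons_iff [hy hnd].
case=> [[<- <-]|hx]; first by rewrite eqc_refl multiplicity_out ?addn0.
case: eqcP => [e|_]; last exact: IH.
by case: hy; rewrite -e; apply/List.in_map_iff; exists x; split => //; apply: In_zip1 hx.
Qed.

Lemma multiplicity_inj pds c c' : List.NoDup (map fst pds) ->
  size c = size pds -> size c' = size pds ->
  multiplicity pds c =1 multiplicity pds c' -> c = c'.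
Proof.
elim: pds c c' => [|y pds IH] [|b c] [|b' c'] //=.
move=> /List.NoDup_cons_iff [hy hnd] [hs] [hs'] h.
have ? : b' = b by have := h y.1; rewrite /= eqc_refl !multiplicity_out // !addn0.
subst b'; congr (_ :: _); apply: IH => // P.
by have /eqP := h P; rewrite /= eqn_add2l => /eqP.
Qed.

Lemma weighted_degE (d m : place -> nat) pds c : size c = size pds ->
  (forall x a, List.In (x, a) (zip pds c) -> d x.1 = x.2 /\ m x.1 = a) ->
  (\sum_(P <- map fst pds) Posz (d P) * Posz (m P))%R = Posz (weighted_deg pds c).
Proof.
elim: pds c => [|y pds IH] [|b c] //=; first by rewrite big_nil.
case=> hs h; rewrite big_cons (IH c) //; last by move=> x a hx; apply: h; right.
by have [-> ->] := h y b (or_introl erefl); rewrite PoszD PoszM.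
Qed.

Lemma divisor_of_eff pds c : List.NoDup (map fst pds) -> size c = size pds ->
  (forall x, List.In x pds -> place_of_deg iota x.2 x.1) ->
  eff_div_of_deg iota (weighted_deg pds c) (divisor_of pds c).
Proof.
move=> hnd hs hpl.
have hsupp P : (divisor_of pds c P != 0)%R -> List.In P (map fst pds).
  by move=> hP; apply: (@multiplicity_supp _ c) => h; rewrite /divisor_of h in hP.
split; [split|split] => //.
- move=> P /hsupp /List.in_map_iff [x [<- hx]]; by case: (hpl x hx).
- by exists (map fst pds).
exists (map fst pds), (degree_at pds); do 2!split => //; split.
  by move=> P /List.in_map_iff [x [<- hx]]; rewrite degree_at_in //; case: (hpl x hx).
symmetry; apply: (weighted_degE (m := multiplicity pds c)) => // x a hxa.
by rewrite (multiplicity_in hnd hxa) (degree_at_in hnd (In_zip1 hxa)).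
Qed.

End DivisorsOfPlaces.

(** * Counting effective divisors *)

Lemma counts_uniq_leq (T : Type) (X : T -> Prop) n (U : eqType) (s : seq U)
    (h : U -> T) :
  counts X n -> uniq s -> (forall x, x \in s -> X (h x)) -> {in s &, injective h} ->
  size s <= n.
Proof.
move=> [f [_ [_ hsurj]]] hu hX hinj.
suff [k [hk <- _]] : exists k : seq 'I_n,
    [/\ uniq k, size k = size s & forall i, i \in k -> exists2 x, x \in s & f i = h x].
  by rewrite -(card_uniqP hk); apply: leq_trans (max_card _) _; rewrite card_ord.
elim: s hu hX hinj => [|x s IH] /=; first by exists [::].
case/andP=> hx hu hX hinj.
have [||k [hk hsz hkf]] := IH hu.
- by move=> y hy; apply: hX; rewrite inE hy orbT.
- by move=> y z hy hz; apply: hinj; rewrite inE ?hy ?hz orbT.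
have [i hi] := hsurj _ (hX x (mem_head x s)).
exists (i :: k); split => /=; [|by rewrite hsz|].
  rewrite hk andbT; apply/negP => /hkf [y hy hfy].
  by move: hx; rewrite (hinj x y) ?hy ?mem_head ?inE ?hy ?orbT // -hi.
move=> j; rewrite inE => /predU1P [->|/hkf [y hy ->]]; first by exists x; rewrite ?mem_head.
by exists y; rewrite // inE hy orbT.
Qed.

Lemma sum_pred (I : Type) (r : seq I) (a : pred I) : \sum_(i <- r) a i = count a r.
Proof. by rewrite -sumn_count sumnE big_map. Qed.

Lemma size_as_sum_count (T : eqType) (s : seq T) (deg : T -> nat) g :
  (forall x, x \in s -> deg x < g) ->
  size s = \sum_(0 <= n < g) count (fun x => deg x == n) s.
Proof.
move=> hdeg; rewrite -sum1_size.
under [RHS]eq_bigr => n _ do rewrite -sum_pred.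
rewrite exchange_big /=; apply: eq_big_seq => x hx.
rewrite (sum_pred _ (fun n => deg x == n)) (eq_count (a2 := pred1 (deg x))) => [|n]; last first.
  by rewrite /= eq_sym.
by rewrite count_uniq_mem ?iota_uniq // mem_iota subn0 hdeg.
Qed.

Lemma size_le_sum_counts (T : Type) (X : nat -> T -> Prop) (a : nat -> nat) g
    (U : eqType) (s : seq U) (deg : U -> nat) (h : U -> T) :
  (forall n, counts (X n) (a n)) -> uniq s ->
  (forall x, x \in s -> deg x < g /\ X (deg x) (h x)) -> {in s &, injective h} ->
  size s <= \sum_(0 <= n < g) a n.
Proof.
move=> hX hu hs hinj.
rewrite (size_as_sum_count (deg := deg) (g := g)) => [|x /hs []//].
apply: leq_sum => n _; rewrite -size_filter.
apply: (counts_uniq_leq (h := h) (hX n)) => [|x|x y]; rewrite ?filter_uniq // ?mem_filter.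
- by case/andP => /eqP <- /hs [].
- by move=> /andP [_ hx] /andP [_ hy]; apply: hinj.
Qed.

Lemma size_le_sum_eff_divisors (K : finFieldType) (F : fieldType)
    (iota : {rmorphism K -> F}) (A : nat -> nat) g
    (pds : seq ((F -> Prop) * nat)) (Cs : seq (seq nat)) :
  (forall n, counts (eff_div_of_deg iota n) (A n)) ->
  List.NoDup (map fst pds) -> (forall x, List.In x pds -> place_of_deg iota x.2 x.1) ->
  uniq Cs -> (forall c, c \in Cs -> size c = size pds /\ weighted_deg pds c < g) ->
  size Cs <= \sum_(0 <= n < g) A n.
Proof.
move=> hA hnd hpl hu hCs.
apply: (size_le_sum_counts (deg := weighted_deg pds) (h := divisor_of pds) hA hu).
  by move=> c /hCs [hs hdeg]; split => //; apply: divisor_of_eff.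
move=> c c' /hCs [hs _] /hCs [hs' _] e; apply: (multiplicity_inj hnd hs hs') => P.
by have := congr1 (fun D => D P) e; case.
Qed.

(** * Families of multiplicity vectors *)

Section Configurations.
Variables (K : finFieldType) (F : fieldType) (iota : {rmorphism K -> F}).
Variables (B : nat -> nat) (pl : nat -> nat -> (F -> Prop)).
Hypothesis hpl : forall r, 0 < r ->
  (forall i, i < B r -> place_of_deg iota r (pl r i)) /\
  (forall i j, i < B r -> j < B r -> pl r i = pl r j -> i = j).

Definition deg_block r := [seq (pl r i, r) | i <- seq.iota 0 (B r)].
Definition deg_blocks rs := flatten (map deg_block rs).

Lemma size_deg_block r : size (deg_block r) = B r.
Proof. by rewrite size_map seq.size_iota. Qed.

Lemma weighted_deg_block r v : size v = B r -> weighted_deg (deg_block r) v = r * sumn v.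
Proof.
rewrite -size_deg_block /deg_block size_map.
elim: (seq.iota 0 (B r)) v => [|i s IH] [|a v] //=; first by rewrite muln0.
by case=> hs; rewrite IH // mulnDr.
Qed.

Lemma In_deg_blocks rs x : List.In x (deg_blocks rs) ->
  x.2 \in rs /\ exists2 i, i < B x.2 & x.1 = pl x.2 i.
Proof.
elim: rs => [|r rs IH] //= hx.
case: (List.in_app_or _ _ _ hx) => [|/IH [h1 h2]]; last by rewrite inE h1 orbT.
case/List.in_map_iff => i [<- /In_mem]; rewrite seq.mem_iota add0n /= => hi.
by rewrite inE eqxx; split => //; exists i.
Qed.

Lemma deg_blocks_deg rs : all (leq 1) rs ->
  forall x, List.In x (deg_blocks rs) -> place_of_deg iota x.2 x.1.
Proof.
move=> /allP hpos x /In_deg_blocks [hr [i hi ->]].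
exact: (proj1 (hpl (hpos _ hr))).
Qed.

Lemma NoDup_deg_blocks rs : uniq rs -> all (leq 1) rs ->
  List.NoDup (map fst (deg_blocks rs)).
Proof.
elim: rs => [|r rs IH] /=; first by constructor.
case/andP => hr hu /andP [hr0 hpos]; rewrite map_cat.
apply: List.NoDup_app; [|exact: IH|].
  rewrite /deg_block -map_comp; apply: NoDup_map_in; first exact: seq.iota_uniq.
  by move=> i j; rewrite !seq.mem_iota /= => hi hj; apply: (proj2 (hpl hr0)).
move=> P /List.in_map_iff [x [<- hx]] /List.in_map_iff [y [e hy]].
move: hx => /List.in_map_iff [i [ex /In_mem]]; rewrite seq.mem_iota /= => hi.
have [hy2 _] := In_deg_blocks hy.
suff er : r = y.2 by move: hr; rewrite er hy2.
have [_ hx] := proj1 (hpl hr0) i hi; have [_ hy'] := deg_blocks_deg hpos hy.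
by apply: (place_deg_uniq (iota := iota) (P := x.1)); [rewrite -ex | rewrite -e].
Qed.

Fixpoint prod_configs (m : nat -> nat) rs : seq (seq nat) :=
  if rs is r :: rs' then [seq v ++ w | v <- seqs_sumn_le (B r) (m r), w <- prod_configs m rs']
  else [:: [::]].

Lemma size_prod_configs m rs :
  size (prod_configs m rs) = \prod_(r <- rs) 'C(B r + m r, m r).
Proof.
elim: rs => [|r rs IH] /=; first by rewrite big_nil.
by rewrite size_allpairs IH size_seqs_sumn_le big_cons.
Qed.

Lemma mem_prod_configs m rs c : c \in prod_configs m rs ->
  size c = size (deg_blocks rs) /\
  weighted_deg (deg_blocks rs) c <= \sum_(r <- rs) r * m r.
Proof.
elim: rs c => [|r rs IH] c /=; first by rewrite inE => /eqP ->; rewrite big_nil.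
case/allpairsP => [[v w] [/= /mem_seqs_sumn_le [s1 h1] /IH [s2 h2] ->]].
rewrite !size_cat s1 s2 size_deg_block; split => //.
rewrite weighted_deg_cat ?size_deg_block // weighted_deg_block // big_cons.
by apply: leq_add => //; apply: leq_mul.
Qed.

Lemma prod_configs_uniq m rs : uniq (prod_configs m rs).
Proof.
elim: rs => [|r rs IH] //=.
apply: allpairs_uniq => //; first exact: seqs_sumn_le_uniq.
move=> [v w] [v' w'] /allpairsP [[a b] [/= ha hb [-> ->]]]
  /allpairsP [[a' b'] [/= ha' hb' [-> ->]]] /= e.
have [s1 _] := mem_seqs_sumn_le ha; have [s1' _] := mem_seqs_sumn_le ha'.
by have [-> ->] := cat_inj (etrans s1 (esym s1')) e.
Qed.

Variable g : nat.

(* The pairs [(k, w)] where [w] is nonzero exactly on the block of some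
   [r \in rs], of degree at most [g - 1] there, and [k = (g - 1) %% r] is the
   degree left for places of degree one. *)
Fixpoint high_configs rs : seq (nat * seq nat) :=
  if rs is r :: rs' then
    [seq ((g - 1) %% r, w ++ nseq (size (deg_blocks rs')) 0)
      | w <- seqs_sumn_le_pos (B r) ((g - 1) %/ r)] ++
    [seq (p.1, nseq (B r) 0 ++ p.2) | p <- high_configs rs']
  else [::].

Lemma mem_high_configs rs p : p \in high_configs rs ->
  [/\ size p.2 = size (deg_blocks rs), 0 < sumn p.2
    & p.1 + weighted_deg (deg_blocks rs) p.2 <= g - 1].
Proof.
elim: rs p => [|r rs IH] p //=.
rewrite mem_cat => /orP [/mapP [w /mem_seqs_sumn_le_pos [s1 h1 h2] ->]|/mapP [q /IH [s1 h1 h2] ->]] /=.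
  rewrite !size_cat size_nseq s1 size_deg_block sumn_cat sumn_nseq mul0n addn0; split => //.
  rewrite weighted_deg_cat ?size_deg_block // weighted_deg_block // weighted_deg_nseq0 addn0.
  by rewrite [leqRHS](divn_eq (g - 1) r) addnC leq_add2r mulnC leq_mul.
rewrite !size_cat size_nseq s1 size_deg_block sumn_cat sumn_nseq mul0n; split => //.
by rewrite weighted_deg_cat ?size_nseq ?size_deg_block // weighted_deg_block ?size_nseq
  // sumn_nseq mul0n muln0.
Qed.

Lemma high_configs_uniq rs : uniq (map snd (high_configs rs)).
Proof.
elim: rs => [|r rs IH] //=.
rewrite map_cat cat_uniq -!map_comp; apply/and3P; split.
- rewrite map_inj_in_uniq ?filter_uniq ?seqs_sumn_le_uniq // => w w' hw hw' /= e.
  have [s1 _ _] := mem_seqs_sumn_le_pos hw; have [s1' _ _] := mem_seqs_sumn_le_pos hw'.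
  by have [] := cat_inj (etrans s1 (esym s1')) e.
- apply/hasPn => _ /mapP [q hq ->] /=; apply/negP => /mapP [w hw e].
  have [s1 _ h] := mem_seqs_sumn_le_pos hw.
  have [e1 _] := cat_inj (etrans (size_nseq _ _) (esym s1)) e.
  by move: h; rewrite -e1 sumn_nseq mul0n.
- rewrite (map_comp (cat (nseq (B r) 0))) map_inj_uniq // => t t' e.
  by have [] := cat_inj (erefl (size (nseq (B r) 0))) e.
Qed.

Lemma sum_high_configs rs : \sum_(p <- high_configs rs) 'C(B 1 + p.1, p.1) =
  \sum_(r <- rs) ('C(B r + (g - 1) %/ r, (g - 1) %/ r) - 1) * 'C(B 1 + (g - 1) %% r, (g - 1) %% r).
Proof.
elim: rs => [|r rs IH] /=; first by rewrite !big_nil.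
rewrite big_cat !big_map /= IH big_cons big_const_seq count_predT iter_addn_0.
by rewrite size_seqs_sumn_le_pos mulnC.
Qed.

(* Each element of [high_configs rs] is completed by every vector on the
   places of degree one whose degree fits in the remaining budget. *)
Definition mixed_configs rs :=
  [seq v ++ nseq (size (deg_blocks rs)) 0 | v <- seqs_sumn_le (B 1) (g - 1)] ++
  flatten [seq [seq v ++ p.2 | v <- seqs_sumn_le (B 1) p.1] | p <- high_configs rs].

Lemma size_mixed_configs rs : size (mixed_configs rs) =
  'C(B 1 + (g - 1), g - 1) + \sum_(p <- high_configs rs) 'C(B 1 + p.1, p.1).
Proof.
rewrite /mixed_configs size_cat size_map size_seqs_sumn_le size_flatten /shape -map_comp.
by rewrite sumnE big_map; congr (_ + _); apply: eq_bigr => p _; rewrite /= size_map size_seqs_sumn_le.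
Qed.

Lemma mem_mixed_configs rs c : c \in mixed_configs rs ->
  size c = size (deg_blocks (1 :: rs)) /\ weighted_deg (deg_blocks (1 :: rs)) c <= g - 1.
Proof.
rewrite mem_cat => /orP [/mapP [v /mem_seqs_sumn_le [s1 h1] ->]|].
  rewrite /= !size_cat s1 size_nseq size_deg_block; split => //.
  by rewrite weighted_deg_cat ?size_deg_block // weighted_deg_block // weighted_deg_nseq0 mul1n addn0.
case/flattenP => _ /mapP [p /mem_high_configs [s2 h2 h3] ->] /mapP [v /mem_seqs_sumn_le [s1 h1] ->].
rewrite /= !size_cat s1 s2 size_deg_block; split => //.
rewrite weighted_deg_cat ?size_deg_block // weighted_deg_block // mul1n.
by apply: leq_trans h3; rewrite leq_add2r.
Qed.

Lemma mixed_configs_uniq rs : uniq (mixed_configs rs).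
Proof.
rewrite /mixed_configs cat_uniq; apply/and3P; split.
- rewrite map_inj_in_uniq ?seqs_sumn_le_uniq // => v v' /mem_seqs_sumn_le [s1 _]
    /mem_seqs_sumn_le [s1' _] e.
  by have [] := cat_inj (etrans s1 (esym s1')) e.
- apply/hasPn => _ /flattenP [t /mapP [q /mem_high_configs [_ h _] ->] /mapP [v hv ->]].
  apply/negP => /mapP [v' hv' e].
  have [_ e2] := cat_inj (etrans (proj1 (mem_seqs_sumn_le hv))
    (esym (proj1 (mem_seqs_sumn_le hv')))) e.
  by move: h; rewrite e2 sumn_nseq mul0n.
- apply: (uniq_flatten_cat (b := B 1)) (seqs_sumn_le_uniq _) (high_configs_uniq rs).
  by move=> k v /mem_seqs_sumn_le [].
Qed.

Lemma prod_binomials_le_sum_counts (A m : nat -> nat) :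
  (forall n, counts (eff_div_of_deg iota n) (A n)) -> 0 < g ->
  \sum_(1 <= r < g | 0 < B r) r * m r <= g - 1 ->
  \prod_(1 <= r < g | 0 < B r) 'C(B r + m r, m r) <= \sum_(0 <= n < g) A n.
Proof.
move=> hA hg hm; set rs := [seq r <- index_iota 1 g | 0 < B r].
have hu : uniq rs by rewrite filter_uniq ?seq.iota_uniq.
have hpos : all (leq 1) rs by apply/allP => r; rewrite mem_filter seq.mem_iota => /and3P [].
rewrite -big_filter -/rs -size_prod_configs.
apply: (size_le_sum_eff_divisors hA (NoDup_deg_blocks hu hpos) (deg_blocks_deg hpos)
  (prod_configs_uniq m rs)) => c /mem_prod_configs [hs hd]; split => //.
by apply: leq_ltn_trans hd _; rewrite big_filter; apply: leq_ltn_trans hm _; rewrite ltn_subrL hg.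
Qed.

Lemma sum_binomials_le_sum_counts (A : nat -> nat) rs :
  (forall n, counts (eff_div_of_deg iota n) (A n)) -> 0 < g ->
  uniq rs -> (forall r, r \in rs -> 1 < r) ->
  'C(B 1 + (g - 1), g - 1) + \sum_(r <- rs) ('C(B r + (g - 1) %/ r, (g - 1) %/ r) - 1)
     * 'C(B 1 + (g - 1) %% r, (g - 1) %% r) <= \sum_(0 <= n < g) A n.
Proof.
move=> hA hg hu hrs.
have hu1 : uniq (1 :: rs) by rewrite /= hu andbT; apply/negP => /hrs.
have hpos : all (leq 1) (1 :: rs).
  by apply/allP => r; rewrite inE => /predU1P [->|/hrs /ltnW].
rewrite -sum_high_configs -size_mixed_configs.
apply: (size_le_sum_eff_divisors hA (NoDup_deg_blocks hu1 hpos) (deg_blocks_deg hpos)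
  (mixed_configs_uniq rs)) => c /mem_mixed_configs [hs hd]; split => //.
by apply: leq_ltn_trans hd _; rewrite ltn_subrL hg.
Qed.

End Configurations.

Lemma places_of_deg_enum (K : finFieldType) (F : fieldType) (iota : {rmorphism K -> F})
    (B : nat -> nat) :
  (forall r, 0 < r -> counts (place_of_deg iota r) (B r)) ->
  exists pl : nat -> nat -> (F -> Prop), forall r, 0 < r ->
    (forall i, i < B r -> place_of_deg iota r (pl r i)) /\
    (forall i j, i < B r -> j < B r -> pl r i = pl r j -> i = j).
Proof.
move=> hB.
suff hpl r : exists p : nat -> (F -> Prop), 0 < r ->
    (forall i, i < B r -> place_of_deg iota r (p i)) /\
    (forall i j, i < B r -> j < B r -> p i = p j -> i = j).
  by have [pl hpl'] := functional_choice _ hpl; exists pl.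
case: (posnP r) => [->|hr]; first by exists (fun _ _ => False).
have [e [einj [ep _]]] := hB r hr.
exists (fun i => oapp e (fun _ => False) (insub i)) => _; split.
  by move=> i hi; rewrite insubT /=.
by move=> i j hi hj; rewrite !insubT /= => /einj /(congr1 val).
Qed.

Theorem theorem3p4 (K : finFieldType) (F : fieldType)
    (iota : {rmorphism K -> F})
    (hF : is_function_field iota) (hK : full_constant_field iota)
    (g : nat) (hg : is_genus iota g) (hg2 : (2 <= g)%N)
    (A B : nat -> nat)
    (hA : forall n : nat, counts (eff_div_of_deg iota n) (A n))
    (hB : forall r : nat, (0 < r)%N -> counts (place_of_deg iota r) (B r)) :
  let Sigma1 := (\sum_(0 <= n < g) A n)%N in
  (forall m : nat -> nat,
      (\sum_(1 <= r < g | (0 < B r)%N) r * m r <= g - 1)%N ->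
      (\prod_(1 <= r < g | (0 < B r)%N) 'C(B r + m r, m r) <= Sigma1)%N)
  /\
  ((0 < B 1)%N -> forall rs : seq nat, uniq rs ->
      (forall r, r \in rs -> [&& 2 <= r, r <= g - 1 & 0 < B r]%N) ->
      ('C(B 1 + (g - 1), g - 1)
       + \sum_(r <- rs) ('C(B r + (g - 1) %/ r, (g - 1) %/ r) - 1)
                        * 'C(B 1 + (g - 1) %% r, (g - 1) %% r)
       <= Sigma1)%N).
Proof.
(* Only the counts [A] and [B] matter: [hF], [hK], [hg] and [0 < B 1] are unused. *)
move=> Sigma1; have [pl hpl] := places_of_deg_enum hB.
have hg0 : 0 < g by apply: leq_trans hg2.
split => [m | _ rs hu hrs].
  exact: (prod_binomials_le_sum_counts hpl hA hg0).
by apply: (sum_binomials_le_sum_counts hpl hA hg0 hu) => r /hrs /andP [].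
Qed.
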